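(* In the nondeterministic Outcome Logic instance, for every program $C$ and atomic assertions $P,Q$: \[ \vDash\{P\}\,C\,\{Q\}\quad\text{iff}\quad\vDash\langle P\rangle\,C\,\langle Q\lor\top^\oplus\rangle . \]
   Context: Nondeterministic instance: the execution model is the powerset monad with $\mathsf{bind}(S,k)=\bigcup_{x\in S}k(x)$, $\mathsf{unit}(x)=\{x\}$, monoid operation $\cup$ and unit $\emptyset$; $\Sigma$ is a set of program states with atomic commands $[\![c]\!]\colon\Sigma\to 2^\Sigma$. Programs $C::=\mathbb{0}\mid\mathbb{1}\mid C_1;C_2\mid C_1+C_2\mid C^\star\mid c$ have semantics $[\![C]\!]\colon\Sigma\to2^\Sigma$: $[\![\mathbb{0}]\!](\sigma)=\emptyset$, $[\![\mathbb{1}]\!](\sigma)=\{\sigma\}$, $[\![C_1;C_2]\!](\sigma)=\bigcup_{\tau\in[\![C_1]\!](\sigma)}[\![C_2]\!](\tau)$, $[\![C_1+C_2]\!](\sigma)=[\![C_1]\!](\sigma)\cup[\![C_2]\!](\sigma)$, $[\![C^\star]\!]$ the least fixed point of $f\mapsto\lambda\sigma.f^\dagger([\![C]\!](\sigma))\cup\{\sigma\}$; $[\![C]\!]^\dagger(S)=\bigcup_{\sigma\in S}[\![C]\!](\sigma)$. Atomic assertions come with a relation $\vDash_\Sigma$ on states, and a set $S\subseteq\Sigma$ satisfies atomic $P$ iff $S\neq\emptyset$ and $\sigma\vDash_\Sigma P$ for all $\sigma\in S$. Outcome assertions are built from $\top,\bot,\top^\oplus,\land,\oplus,\Rightarrow$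 and atomic assertions, with $S\vDash\top^\oplus$ iff $S=\emptyset$, $S\vDash\varphi\oplus\psi$ iff $S=S_1\cup S_2$ with $S_1\vDash\varphi$, $S_2\vDash\psi$, and $\land,\Rightarrow,\top,\bot$ classical; $\lnot\varphi=\varphi\Rightarrow\bot$ and $\varphi\lor\psi=\lnot(\lnot\varphi\land\lnot\psi)$. The OL triple $\vDash\langle\varphi\rangle C\langle\psi\rangle$ holds iff for all $S\subseteq\Sigma$, $S\vDash\varphi$ implies $[\![C]\!]^\dagger(S)\vDash\psi$. The Hoare triple $\vDash\{P\}C\{Q\}$ holds iff for all $\sigma$ with $\sigma\vDash_\Sigma P$ and all $\tau\in[\![C]\!](\sigma)$, $\tau\vDash_\Sigma Q$. *)

(* Nondeterministic instance of Outcome Logic.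
   Sets of states are predicates Σ -> Prop; powerset-monad results are
   relations (a function Σ -> 2^Σ is represented as Σ -> Σ -> Prop). *)
Set Implicit Arguments.

Section OL.
Variable Sigma : Type.
Variable Atom : Type.
Variable atom_sem : Atom -> Sigma -> (Sigma -> Prop).
Variable AP : Type.
Variable sat_state : Sigma -> AP -> Prop.

Definition set := Sigma -> Prop.

Inductive prog : Type :=
| PZero : prog
| POne : prog
| PSeq : prog -> prog -> prog
| PPlus : prog -> prog -> prog
| PStar : prog -> prog
| PAtom : Atom -> prog.

(* The least fixed point of f ↦ λσ. f†([[C]](σ)) ∪ {σ}, given by the
   inductively defined (hence least) relation closed under that operator. *)
Inductive star_rel (R : Sigma -> set) : Sigma -> set :=
| star_refl : forall s, star_rel R s s
| star_step : forall s r t, R s r -> star_rel R r t -> star_rel R s t.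

Fixpoint sem (C : prog) : Sigma -> set :=
  match C with
  | PZero => fun _ _ => False
  | POne => fun s t => t = s
  | PSeq C1 C2 => fun s t => exists r, sem C1 s r /\ sem C2 r t
  | PPlus C1 C2 => fun s t => sem C1 s t \/ sem C2 s t
  | PStar C1 => star_rel (sem C1)
  | PAtom c => atom_sem c
  end.

Definition sem_dag (C : prog) (S : set) : set :=
  fun t => exists s, S s /\ sem C s t.

Inductive assn : Type :=
| ATop : assn
| ABot : assn
| ATopOplus : assn
| AAnd : assn -> assn -> assn
| AOplus : assn -> assn -> assn
| AImp : assn -> assn -> assn
| AAtom : AP -> assn.

Definition ANot (phi : assn) : assn := AImp phi ABot.
Definition AOr (phi psi : assn) : assn := ANot (AAnd (ANot phi) (ANot psi)).

Fixpoint asat (S : set) (phi : assn) : Prop :=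
  match phi with
  | ATop => True
  | ABot => False
  | ATopOplus => forall s, ~ S s
  | AAnd p q => asat S p /\ asat S q
  | AOplus p q => exists S1 S2 : set,
      (forall s, S s <-> S1 s \/ S2 s) /\ asat S1 p /\ asat S2 q
  | AImp p q => asat S p -> asat S q
  | AAtom P => (exists s, S s) /\ (forall s, S s -> sat_state s P)
  end.

Definition ol_triple (phi : assn) (C : prog) (psi : assn) : Prop :=
  forall S : set, asat S phi -> asat (sem_dag C S) psi.

Definition hoare_triple (P : AP) (C : prog) (Q : AP) : Prop :=
  forall s, sat_state s P -> forall t, sem C s t -> sat_state t Q.

End OL.

(* Classically, a set satisfies [Q ∨ ⊤⊕] exactly when all of its elements
   satisfy [Q]: if it is nonempty it satisfies [Q], and if it is empty it
   satisfies [⊤⊕]. The OL triple therefore says that every outcome reachable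
   from a [P]-set satisfies [Q], and since [P]-sets are unions of
   [P]-singletons this is the Hoare triple. *)
From Stdlib Require Import Classical.

Section HoareAsOutcome.
Variables Sigma Atom AP : Type.
Variable atom_sem : Atom -> Sigma -> set Sigma.
Variable sat_state : Sigma -> AP -> Prop.

Lemma asat_or_emp_iff (S : set Sigma) (Q : AP) :
  asat sat_state S (AOr (AAtom Q) (ATopOplus AP)) <-> forall s, S s -> sat_state s Q.
Proof.
  simpl; split.
  - intros Hor s Hs.
    apply NNPP; intro HnQ.
    apply Hor; split.
    + intros [_ HallQ]; exact (HnQ (HallQ s Hs)).
    + intros Hemp; exact (Hemp s Hs).
  - intros HallQ [HnotQ HnotEmp].
    apply HnotEmp; intros s Hs.
    apply HnotQ; split; [exists s; exact Hs | exact HallQ].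
Qed.

Lemma asat_atom_singleton (s : Sigma) (P : AP) :
  asat sat_state (fun x => x = s) (AAtom P) <-> sat_state s P.
Proof.
  simpl; split.
  - intros [_ HallP]; exact (HallP s eq_refl).
  - intros HP; split; [exists s; reflexivity | intros x ->; exact HP].
Qed.

Lemma sem_dag_singleton (C : prog Atom) (s t : Sigma) :
  sem_dag atom_sem C (fun x => x = s) t <-> sem atom_sem C s t.
Proof.
  split.
  - intros [r [-> Hst]]; exact Hst.
  - intros Hst; exists s; split; [reflexivity | exact Hst].
Qed.

Lemma ol_triple_or_emp_iff (phi : assn AP) (C : prog Atom) (Q : AP) :
  ol_triple atom_sem sat_state phi C (AOr (AAtom Q) (ATopOplus AP)) <->
  forall S, asat sat_state S phi ->
    forall t, sem_dag atom_sem C S t -> sat_state t Q.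
Proof.
  unfold ol_triple; split; intros H S HS.
  - apply asat_or_emp_iff, H, HS.
  - apply asat_or_emp_iff; exact (H S HS).
Qed.

End HoareAsOutcome.

Theorem theorem4p6 (Sigma Atom AP : Type)
  (atom_sem : Atom -> Sigma -> (Sigma -> Prop))
  (sat_state : Sigma -> AP -> Prop)
  (C : prog Atom) (P Q : AP) :
  hoare_triple atom_sem sat_state P C Q <->
  ol_triple atom_sem sat_state (@AAtom AP P) C
    (AOr (@AAtom AP Q) (@ATopOplus AP)).
Proof.
  rewrite ol_triple_or_emp_iff; unfold hoare_triple; split.
  - intros Hhoare S [_ HallP] t [s [Hs Hst]].
    exact (Hhoare s (HallP s Hs) t Hst).
  - intros Hol s HP t Hst.
    apply (Hol (fun x => x = s)).
    + apply asat_atom_singleton; exact HP.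
    + apply sem_dag_singleton; exact Hst.
Qed.
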